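(* For every integer $n\ge 0$ the following identities hold: (i) $\displaystyle\sum_{i=0}^{n}B_i(t)\,U_{n-i}\!\left(-\tfrac{t}{2}\right)=\begin{cases}0 & \text{if } n \text{ is even},\\ B_{\frac{n+1}{2}}(t) & \text{if } n \text{ is odd};\end{cases}$ (ii) $\displaystyle\sum_{i=0}^{n}B_i(t)B_{n-i}(-t)=\begin{cases}B_{\frac{n}{2}}(2-t^{2}) & \text{if } n \text{ is even},\\ 0 & \text{if } n \text{ is odd};\end{cases}$ (iii) as an identity of rational functions of $t$, $$\frac{t^{2}}{t^{4}-1}\sum_{i=0}^{n}\left(t^{2i}-\frac{1}{t^{2i}}\right)B_{n-i}\!\left(-t^{2}-\frac{1}{t^{2}}\right)=\begin{cases}B_{\frac{n}{2}}\!\left(-t^{2}-\frac{1}{t^{2}}\right) & \text{if } n \text{ is even},\\ 0 & \text{if } n \text{ is odd}.\end{cases}$$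
   Context: The Stern polynomials $B_n(t)\in\mathbb{Z}[t]$, $n\ge 0$, are defined by $B_0(t)=0$, $B_1(t)=1$, $B_{2n}(t)=tB_n(t)$ and $B_{2n+1}(t)=B_n(t)+B_{n+1}(t)$ for $n\ge 1$. $U_n(t)$ denotes the Chebyshev polynomial of the second kind, determined by $\frac{1}{1-2tx+x^{2}}=\sum_{n\ge 0}U_n(t)x^{n}$. *)

From HB Require Import structures.
From mathcomp Require Import all_boot all_order all_algebra fraction.
Set Implicit Arguments. Unset Strict Implicit. Unset Printing Implicit Defensive.
Import Order.TTheory GRing.Theory Num.Theory.
Local Open Scope ring_scope.

(* Stern polynomials B_n over an arbitrary ring R:
   B_0 = 0, B_1 = 1, B_{2m} = t B_m, B_{2m+1} = B_m + B_{m+1} (m >= 1).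
   Defined with fuel; stern n uses fuel n, which suffices. *)
Fixpoint stern_fuel (R : nzRingType) (k n : nat) : {poly R} :=
  match k with
  | 0%N => 0
  | k'.+1 =>
    if n == 0%N then 0
    else if n == 1%N then 1
    else if odd n then stern_fuel R k' n./2 + stern_fuel R k' (n./2).+1
    else 'X * stern_fuel R k' n./2
  end.

Definition stern (R : nzRingType) (n : nat) : {poly R} := stern_fuel R n n.

(* Chebyshev polynomials of the second kind:
   U_0 = 1, U_1 = 2t, U_{n+2} = 2t U_{n+1} - U_n
   (equivalent to 1/(1 - 2tx + x^2) = sum U_n(t) x^n). *)
Fixpoint chebU_pair (R : nzRingType) (n : nat) : {poly R} * {poly R} :=
  match n with
  | 0%N => (1, 'X *+ 2)
  | m.+1 => let: (a, b) := chebU_pair R m in (b, 'X *+ 2 * b - a)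
  end.

Definition chebU (R : nzRingType) (n : nat) : {poly R} := (chebU_pair R n).1.

Definition ratfun := {fraction {poly rat}}.
Definition tvar : ratfun := @FracField.tofrac {poly rat} 'X.

From mathcomp Require Import all_boot all_order all_algebra fraction zify ring.
Set Implicit Arguments.
Unset Strict Implicit.
Unset Printing Implicit Defensive.
Import GRing.Theory.
Local Open Scope ring_scope.

(* Call f "Stern-like with parameter c" if f 0 = 0, f (2n) = c f n and
   f (2n+1) = f n + f (n+1); the Stern polynomials are Stern-like with parameter
   t, and so is their image under any ring morphism.  Identities (i) and (iii)
   are convolutions of a Stern-like f with a Chebyshev sequence satisfying
   u (k+2) = -c u (k+1) - u k: by this recurrence the convolution C satisfies
   C (n+2) = -c C (n+1) - C n plus boundary terms, and the Stern recurrences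
   make C vanish at even (resp. odd) n.  In (iii) the coefficients
   (y^i - y^-i) / (y - y^-1), y = t^2, are U_(i-1)(-s/2) with s = -y - y^-1.
   For (ii), splitting C = f * g (g Stern-like with parameter -c) by the parity
   of the summation index gives C (2m+1) = 0 and
   C (2m+2) = C m + C (m+2) + (2 - c^2) C (m+1), which is exactly the recurrence
   satisfied by the even samples of a Stern-like h with parameter 2 - c^2. *)

Section SternRecurrences.
Variable R : nzRingType.

Lemma stern_fuel_stable k1 k2 n : (n <= k1)%N -> (n <= k2)%N ->
  stern_fuel R k1 n = stern_fuel R k2 n.
Proof.
elim: k1 k2 n => [|k1 IH] [|k2] n //=; rewrite ?leqn0.
- by move=> /eqP->.
- by move=> _ /eqP->.
move=> n_le1 n_le2; case: ifP => // /negbT n_neq0; case: ifP => // /negbT n_neq1.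
by case: ifP => n_odd; [congr (_ + _) | congr (_ * _)]; apply: IH; lia.
Qed.

Lemma sternE n : (1 < n)%N -> stern R n =
  if odd n then stern R n./2 + stern R (n./2).+1 else 'X * stern R n./2.
Proof.
case: n => [|n] // n_gt0; rewrite [LHS]/stern [LHS]/= ifN; last by lia.
rewrite /=; case: ifP => n_odd; [congr (_ + _) | congr (_ * _)];
  by apply: stern_fuel_stable; lia.
Qed.

Lemma stern_double n : stern R n.*2 = 'X * stern R n.
Proof. by case: n => [|n]; rewrite ?mulr0 // sternE ?odd_double ?doubleK //; lia. Qed.

Lemma stern_doubleS n : stern R n.*2.+1 = stern R n + stern R n.+1.
Proof.
case: n => [|n]; first by rewrite add0r.
by rewrite sternE /= ?odd_double ?uphalf_double //; lia.
Qed.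

End SternRecurrences.

Definition stern_like (R : nzRingType) (c : R) (f : nat -> R) :=
  [/\ f 0%N = 0, forall n, f n.*2 = c * f n & forall n, f n.*2.+1 = f n + f n.+1].

Lemma stern_like_stern (R : nzRingType) : stern_like 'X (stern R).
Proof. by split; [| exact: stern_double | exact: stern_doubleS]. Qed.

Lemma stern_like_rmorph (R S : nzRingType) (phi : {rmorphism R -> S}) c f :
  stern_like c f -> stern_like (phi c) (phi \o f).
Proof.
by case=> f0 f_double f_doubleS; split=> [|n|n] /=;
  rewrite ?f0 ?f_double ?f_doubleS (rmorph0, rmorphM, rmorphD).
Qed.

Lemma big_ord_double (V : nmodType) m (F : nat -> V) :
  \sum_(i < m.*2) F i = \sum_(a < m) F a.*2 + \sum_(a < m) F a.*2.+1.
Proof.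
elim: m => [|m IH]; first by rewrite !big_ord0 addr0.
by rewrite doubleS !big_ord_recr /= IH addrACA -addrA.
Qed.

Section Convolution.
Variable R : comNzRingType.
Implicit Types f g u w : nat -> R.

Definition conv f g n := \sum_(i < n.+1) f i * g (n - i)%N.

Lemma convC f g n : conv f g n = conv g f n.
Proof.
rewrite /conv (reindex_inj rev_ord_inj); apply: eq_bigr => i _ /=.
by rewrite subSS subKn 1?mulrC // -ltnS.
Qed.

Lemma conv_shift f w n : w 0%N = 0 -> conv f w n.+1 = conv f (fun k => w k.+1) n.
Proof.
move=> w0; rewrite /conv big_ord_recr /= subnn w0 mulr0 addr0.
by apply: eq_bigr => i _; rewrite subSn // -ltnS.
Qed.

Lemma conv_shiftl f g n : f 0%N = 0 -> conv f g n.+1 = conv (fun k => f k.+1) g n.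
Proof. by move=> f0; rewrite convC conv_shift // convC. Qed.

Lemma conv_rec f u a b : (forall k, u k.+2 = a * u k.+1 + b * u k) -> forall n,
  conv f u n.+2 = a * conv f u n.+1 + b * conv f u n
                  + f n.+1 * (u 1%N - a * u 0%N) + f n.+2 * u 0%N.
Proof.
move=> uSS n.
have peel k : conv f u k.+1 = \sum_(i < k.+1) f i * u (k.+1 - i)%N + f k.+1 * u 0%N.
  by rewrite /conv big_ord_recr subnn.
have inner : \sum_(i < n.+1) f i * u (n.+2 - i)%N =
    a * \sum_(i < n.+1) f i * u (n.+1 - i)%N + b * conv f u n.
  rewrite /conv !big_distrr -big_split; apply: eq_bigr => i _ /=.
  have i_le : (i <= n)%N by rewrite -ltnS.
  by rewrite subSn ?(leqW i_le) // subSn // uSS; ring.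
by rewrite peel big_ord_recr /= subSnn inner peel; ring.
Qed.

End Convolution.

Section LucasConvolution.
Variables (R : comNzRingType) (c : R) (f : nat -> R).
Hypothesis f_stern : stern_like c f.

(* [u] and [w] below are the Lucas sequences with parameters (-c, 1), shifted
   by one: u k = U_k(-c/2) and w k = U_(k-1)(-c/2). *)

Lemma conv_lucasS u : u 0%N = 1 -> u 1%N = - c ->
    (forall k, u k.+2 = - c * u k.+1 - u k) ->
  forall n, conv f u n = if odd n then f n.+1./2 else 0.
Proof.
move=> u0 u1 uSS; case: f_stern => f0 f_double f_doubleS.
have uSS' k : u k.+2 = - c * u k.+1 + (-1) * u k by rewrite mulN1r.
have conv_double m : conv f u m.*2 = 0 /\ conv f u m.*2.+1 = f m.+1.
  elim: m => [|m [even_m odd_m]].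
    by rewrite /conv !big_ord_recr !big_ord0 /= f0 u0; split; ring.
  have even_mS : conv f u m.+1.*2 = 0.
    by rewrite doubleS (conv_rec f uSS') even_m odd_m u0 u1 -doubleS f_double; ring.
  split=> //.
  by rewrite doubleS (conv_rec f uSS') -doubleS even_mS odd_m u0 u1 f_doubleS; ring.
move=> n; have := odd_double_half n; move: (odd n) (n./2) => [] m <-;
  by case: (conv_double m); rewrite /= ?odd_double ?doubleK.
Qed.

Lemma conv_lucas w : w 0%N = 0 -> w 1%N = 1 ->
    (forall k, w k.+2 = - c * w k.+1 - w k) ->
  forall n, conv f w n = if odd n then 0 else f n./2.
Proof.
move=> w0 w1 wSS [|n]; first by rewrite /conv big_ord1 w0 mulr0; case: f_stern.
rewrite conv_shift // (conv_lucasS _ _ (fun k => wSS k.+1)) ?wSS ?w0 ?w1 /=.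
- by case: odd.
- by [].
- by rewrite mulr1 subr0.
Qed.

End LucasConvolution.

Section SternPairConvolution.
Variables (R : comNzRingType) (c : R) (f g h : nat -> R).
Hypotheses (f_stern : stern_like c f) (g_stern : stern_like (- c) g).
Hypotheses (h_stern : stern_like (2 - c ^+ 2) h).
(* The recurrences leave the value at 1 free. *)
Hypotheses (f1 : f 1%N = 1) (g1 : g 1%N = 1) (h1 : h 1%N = 1).

Lemma conv_stern_pair_odd m : conv f g m.*2.+1 = 0.
Proof.
case: f_stern g_stern => f0 f_double f_doubleS [g0 g_double g_doubleS].
rewrite {1}/conv -doubleS (big_ord_double _ (fun i => f i * g (m.*2.+1 - i)%N)).
have evens : \sum_(a < m.+1) f a.*2 * g (m.*2.+1 - a.*2)%N =
    c * (conv f g m + conv f (fun k => g k.+1) m).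
  rewrite /conv -big_split big_distrr; apply: eq_bigr => a _ /=.
  have a_le : (a <= m)%N by rewrite -ltnS.
  by rewrite (_ : m.*2.+1 - a.*2 = (m - a).*2.+1)%N ?f_double ?g_doubleS; [ring | lia].
have odds : \sum_(a < m.+1) f a.*2.+1 * g (m.*2.+1 - a.*2.+1)%N =
    - c * (conv f g m + conv (fun k => f k.+1) g m).
  rewrite /conv -big_split big_distrr; apply: eq_bigr => a _ /=.
  have a_le : (a <= m)%N by rewrite -ltnS.
  by rewrite (_ : m.*2.+1 - a.*2.+1 = (m - a).*2)%N ?f_doubleS ?g_double; [ring | lia].
by rewrite evens odds -conv_shift // -conv_shiftl //; ring.
Qed.

Lemma conv_stern_pair_doubleS m : conv f g m.+1.*2 =
  conv f g m + conv f g m.+2 + (2 - c ^+ 2) * conv f g m.+1.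
Proof.
case: f_stern g_stern => f0 f_double f_doubleS [g0 g_double g_doubleS].
rewrite {1}/conv big_ord_recr /= subnn g0 mulr0 addr0.
rewrite (big_ord_double _ (fun i => f i * g (m.+1.*2 - i)%N)).
have evens : \sum_(a < m.+1) f a.*2 * g (m.+1.*2 - a.*2)%N =
    - c ^+ 2 * conv f (fun k => g k.+1) m.
  rewrite /conv big_distrr; apply: eq_bigr => a _ /=.
  have a_le : (a <= m)%N by rewrite -ltnS.
  by rewrite (_ : m.+1.*2 - a.*2 = (m - a).+1.*2)%N ?f_double ?g_double; [ring | lia].
have odds : \sum_(a < m.+1) f a.*2.+1 * g (m.+1.*2 - a.*2.+1)%N =
    conv f g m + conv f (fun k => g k.+1) m
    + conv (fun k => f k.+1) g m + conv (fun k => f k.+1) (fun k => g k.+1) m.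
  rewrite /conv -!big_split; apply: eq_bigr => a _ /=.
  have a_le : (a <= m)%N by rewrite -ltnS.
  by rewrite (_ : m.+1.*2 - a.*2.+1 = (m - a).*2.+1)%N ?f_doubleS ?g_doubleS; [ring | lia].
by rewrite evens odds -conv_shift // -conv_shiftl // -conv_shift // -conv_shiftl //; ring.
Qed.

Lemma conv_stern_pair n : conv f g n = if odd n then 0 else h n./2.
Proof.
case: h_stern => h0 h_double h_doubleS.
pose T k := if odd k then 0 else h k./2.
have T_rec k : T k + T k.+2 + (2 - c ^+ 2) * T k.+1 = h k.+1.
  have := odd_double_half k; move: (odd k) (k./2) => [] j <-;
    rewrite /T ?add1n ?add0n /= !odd_double /= ?uphalf_double ?doubleK.
    by rewrite -doubleS h_double; ring.
  by rewrite h_doubleS; ring.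
elim/ltn_ind: n => n IH; move: (odd_double_half n) IH.
move: (odd n) (n./2) => [] m <- IH /=; first exact: conv_stern_pair_odd.
case: m IH => [|[|m]] IH.
- by rewrite /conv big_ord1 h0; case: f_stern => -> _ _; rewrite mul0r.
- case: f_stern g_stern => f0 _ _ [g0 _ _].
  by rewrite /conv !big_ord_recr big_ord0 /= f0 g0 f1 g1 h1; ring.
rewrite conv_stern_pair_doubleS !IH; first exact: T_rec.
all: lia.
Qed.

End SternPairConvolution.

Lemma stern_like_comp (R : comNzRingType) (p : {poly R}) :
  stern_like p (fun n => stern R n \Po p).
Proof.
by have := stern_like_rmorph (comp_poly p) (stern_like_stern R); rewrite /= comp_polyX.
Qed.

Lemma stern_like_horner (R : comNzRingType) (x : R) :
  stern_like x (fun n => (stern R n).[x]).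
Proof.
have := stern_like_rmorph (horner_eval x) (stern_like_stern R).
by rewrite /= horner_evalE hornerX.
Qed.

Lemma chebUSS (R : nzRingType) k :
  chebU R k.+2 = 'X *+ 2 * chebU R k.+1 - chebU R k.
Proof. by rewrite /chebU /=; case: (chebU_pair R k). Qed.

Lemma lucas_geometric (F : fieldType) (y : F) : y != 0 -> y ^+ 2 != 1 ->
  let w k := y / (y ^+ 2 - 1) * (y ^+ k - y^-1 ^+ k) in
  [/\ w 0%N = 0, w 1%N = 1 & forall k, w k.+2 = (y + y^-1) * w k.+1 - w k].
Proof.
move=> y_neq0 y2_neq1; have yV : y * y^-1 = 1 by rewrite mulfV.
split=> [||k].
- by rewrite subrr mulr0.
- by rewrite !expr1; field; rewrite y_neq0 subr_eq0 y2_neq1.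
- by rewrite !exprS; ring: yV.
Qed.

Lemma tvar_neq0 : tvar != 0.
Proof. by rewrite tofrac_eq0 polyX_eq0. Qed.

Lemma tvar4_neq1 : tvar ^+ 4 != 1.
Proof.
rewrite -subr_eq0 /tvar -tofracXn -tofrac1 -tofracB tofrac_eq0.
by rewrite -size_poly_eq0 -polyC1 size_XnsubC.
Qed.

Theorem theorem3p6 (n : nat) :
  [/\
   \sum_(i < n.+1) stern rat i * (chebU rat (n - i) \Po (- (2^-1 : rat) *: 'X))
     = (if odd n then stern rat (n.+1)./2 else 0),
   \sum_(i < n.+1) stern rat i * (stern rat (n - i) \Po (- 'X))
     = (if odd n then 0 else stern rat n./2 \Po (2%:P - 'X ^+ 2))
   &
   let t : ratfun := tvar in
   let s := - t ^+ 2 - (t ^+ 2)^-1 in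
   t ^+ 2 / (t ^+ 4 - 1) *
     \sum_(i < n.+1) (t ^+ (2 * i) - (t ^+ (2 * i))^-1)
                     * (stern ratfun (n - i)).[s]
     = (if odd n then 0 else (stern ratfun n./2).[s])].
Proof.
split.
- set q := _ *: 'X.
  have Xq : ('X *+ 2) \Po q = - 'X.
    rewrite mulr2n comp_polyD comp_polyX -mulr2n /q scalerMnl.
    by rewrite (_ : _ *+ 2 = -1) ?scaleN1r //; apply/eqP.
  rewrite -/(conv (stern rat) (fun k => chebU rat k \Po q) n).
  apply: (conv_lucasS (stern_like_stern rat)) => [||k].
  + exact: rmorph1.
  + by rewrite /chebU /= Xq.
  + by rewrite chebUSS comp_polyB comp_polyM Xq.
- have h_stern := stern_like_comp (2%:P - 'X ^+ 2 : {poly rat}).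
  rewrite polyC_natr in h_stern *.
  rewrite -/(conv (stern rat) (fun k => stern rat k \Po - 'X) n).
  by apply: (conv_stern_pair (stern_like_stern rat) (stern_like_comp _) h_stern);
    rewrite /= ?rmorph1.
move=> t s; set y := t ^+ 2.
have y2_neq1 : y ^+ 2 != 1 by rewrite -exprM tvar4_neq1.
have [w0 w1 wSS] := lucas_geometric (expf_neq0 2 tvar_neq0) y2_neq1.
have sE : - s = y + y^-1 by rewrite /s opprB opprK addrC.
transitivity (conv (fun k => y / (y ^+ 2 - 1) * (y ^+ k - y^-1 ^+ k))
                   (fun k => (stern ratfun k).[s]) n).
  rewrite (exprM t 2 2) /conv big_distrr; apply: eq_bigr => i _.
  by rewrite exprM exprVn; apply: mulrA.
rewrite convC; apply: (conv_lucas (stern_like_horner s) w0 w1) => k.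
by rewrite sE wSS.
Qed.
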